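(* Let $n$ be a prime number, let $S\subseteq\{1,2,\ldots,\lfloor n/2\rfloor\}$, let $G=C_n(S)$ be the circulant graph on $S$, let $K$ be a field, $R=K[x_0,\ldots,x_{n-1}]$, and let $I(G)$ be the edge ideal of $G$. Then the regularity index of $R/I(G)$ equals $1$: \[ \mathrm{ri}(R/I(G))=1. \]
   Context: For $k\in\mathbb{Z}$ write $|k|_n=\min\{|k|,\,n-|k|\}$. The circulant graph $C_n(S)$ has vertex set $\mathbb{Z}_n=\{0,1,\ldots,n-1\}$ and edge set $\{\{i,j\} : |j-i|_n\in S\}$. The edge ideal $I(G)\subseteq R$ is generated by the monomials $x_ix_j$ with $\{i,j\}$ an edge of $G$. For a homogeneous ideal $I$ of $R$, the Hilbert function is $H_{R/I}(k)=\dim_K (R/I)_k$, and $P_{R/I}$ is the unique polynomial with $H_{R/I}(k)=P_{R/I}(k)$ for all $k\gg0$ (the Hilbert polynomial). The regularity index $\mathrm{ri}(R/I)$ is the minimum integer $k_0\in\mathbb{N}$ such that $H_{R/I}(k)=P_{R/I}(k)$ for all $k\ge k_0$. *)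

From HB Require Import structures.
From mathcomp Require Import all_boot all_order all_algebra.
From mathcomp Require Import mpoly.
Set Implicit Arguments. Unset Strict Implicit. Unset Printing Implicit Defensive.
Import Order.TTheory GRing.Theory Num.Theory.
Local Open Scope ring_scope.

Definition cdist (n : nat) (i j : 'I_n) : nat :=
  minn (maxn i j - minn i j) (n - (maxn i j - minn i j)).

Definition circ_edge (n : nat) (S : seq nat) (i j : 'I_n) : bool :=
  (i != j) && (cdist i j \in S).

Definition in_edge_ideal (K : fieldType) (n : nat) (e : rel 'I_n)
    (f : {mpoly K[n]}) : Prop :=
  exists c : 'I_n -> 'I_n -> {mpoly K[n]},
    f = \sum_(i < n) \sum_(j < n) (if e i j then c i j * ('X_i * 'X_j) else 0).

(* A family of m homogeneous polynomials of degree k whose images in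
   (R/I)_k are K-linearly independent. *)
Definition indep_mod (K : fieldType) (n : nat) (I : {mpoly K[n]} -> Prop)
    (k m : nat) (f : 'I_m -> {mpoly K[n]}) : Prop :=
  (forall i, f i \is k.-homog) /\
  (forall c : 'I_m -> K, I (\sum_(i < m) c i *: f i) -> forall i, c i = 0).

(* dim_K (R/I)_k = m  (for a homogeneous ideal I): m is the maximal size of
   a family of degree-k forms that is linearly independent modulo I. *)
Definition hilb_value (K : fieldType) (n : nat) (I : {mpoly K[n]} -> Prop)
    (k m : nat) : Prop :=
  (exists f : 'I_m -> {mpoly K[n]}, indep_mod I k f) /\
  (forall m' (f : 'I_m' -> {mpoly K[n]}), indep_mod I k f -> (m' <= m)%N).

Definition is_hilbert_function (K : fieldType) (n : nat)
    (I : {mpoly K[n]} -> Prop) (H : nat -> nat) : Prop :=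
  forall k, hilb_value I k (H k).

Definition agrees_from (H : nat -> nat) (P : {poly rat}) (k0 : nat) : Prop :=
  forall k, (k0 <= k)%N -> (H k)%:R = P.[k%:R].

Definition is_hilbert_poly (H : nat -> nat) (P : {poly rat}) : Prop :=
  exists k0, agrees_from H P k0.

Definition regularity_index (H : nat -> nat) (r : nat) : Prop :=
  exists P : {poly rat}, is_hilbert_poly H P /\ agrees_from H P r /\
    (forall r', agrees_from H P r' -> (r <= r')%N).

From HB Require Import structures.
From mathcomp Require Import all_boot all_order all_algebra all_fingroup.
From mathcomp Require Import cyclic pgroup sylow.
From mathcomp Require Import mpoly.
From mathcomp Require Import zify ring lra.
Set Implicit Arguments. Unset Strict Implicit. Unset Printing Implicit Defensive.

Import GRing.Theory Num.Theory.

(* The monomials of degree k whose support is an independent set of G are a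
   basis of (R/I(G))_k.  Grouping them by support gives, for k >= 1,
   H(k) = sum_{A independent, A <> 0} binomial(k-1, |A|-1), a polynomial P(k),
   whereas H(0) = 1.  As binomial(-1, j) = (-1)^j, P(0) = H(0) exactly when
   the independent sets of even and of odd size are equinumerous.  But the
   rotation i |-> i + 1 of Z_n permutes the independent sets of each parity;
   for n prime its orbits have size 1 or n, and the only invariant independent
   set is the empty one (a nonempty invariant set is all of Z_n, which
   contains an edge).  Hence the numbers of even and of odd independent sets
   are 1 and 0 modulo n. *)

Definition indep_set n (e : rel 'I_n) (A : {set 'I_n}) : bool :=
  [forall i in A, forall j in A, ~~ e i j].

Lemma indep_set0 n (e : rel 'I_n) : indep_set e set0.
Proof. by apply/forall_inP => i; rewrite inE. Qed.

Section Rotation.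
Variable n : nat.

Definition rot : {perm 'I_n} := perm (@ordS_inj n).

Lemma rotX k (i : 'I_n) : val ((rot ^+ k)%g i) = (i + k) %% n.
Proof.
elim: k => [|k IH]; first by rewrite expg0 perm1 addn0 modn_small.
by rewrite expgSr permM permE /= IH addnS -addn1 modnDml addn1.
Qed.

Lemma rot_fixed_set (A : {set 'I_n}) :
  A \in afix 'P^* <[rot]>%g -> A != set0 -> A = setT.
Proof.
move=> /afixP fixA /set0Pn[i iA]; apply/setP => j; rewrite inE.
rewrite -(fixA _ (mem_cycle rot (j + n - i))) /= setactE.
apply/imsetP; exists i => //; apply: val_inj.
rewrite /= rotX addnBA ?addKn ?modnDr ?modn_small //.
by rewrite ltnW // (leq_trans (ltn_ord i)) ?leq_addl.
Qed.

Variable e : rel 'I_n.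
Hypothesis e_rot : forall i j, e (ordS i) (ordS j) = e i j.

Lemma indep_set_rot (A : {set 'I_n}) : indep_set e (rot @: A) = indep_set e A.
Proof.
apply/forall_inP/forall_inP => indepA i iA; apply/forall_inP => j jA.
  by have := forall_inP (indepA _ (imset_f rot iA)) _ (imset_f rot jA); rewrite !permE e_rot.
case/imsetP: iA jA => i' i'A -> /imsetP[j' j'A ->].
by rewrite !permE e_rot (forall_inP (indepA _ i'A)).
Qed.

Hypotheses (n_prime : prime n) (setT_dep : ~~ indep_set e setT).

Lemma indep_parity_fixed (b : bool) :
  [set A | indep_set e A && (odd #|A| == b)] :&: afix 'P^* <[rot]>%g
    = if b then set0 else [set set0].
Proof.
apply/setP => A; rewrite in_setI inE; have [-> | A0] := eqVneq A set0.
  rewrite indep_set0 cards0; case: b; rewrite /= ?in_set0 ?in_set1 ?eqxx //.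
  by apply/afixP => x _; rewrite /= setactE imset0.
have -> : A \in (if b then set0 else [set set0]) = false by case: b; rewrite ?inE ?(negbTE A0).
apply/negbTE/andP => -[/andP[indepA _] fixA].
by move: indepA; rewrite (rot_fixed_set fixA A0) (negbTE setT_dep).
Qed.

Lemma card_indep_parity_mod (b : bool) :
  #|[set A | indep_set e A && (odd #|A| == b)]| = ~~ b %[mod n].
Proof.
have actX : [acts <[rot]>%g, on [set A | indep_set e A && (odd #|A| == b)] | 'P^*].
  rewrite cycle_subG; apply/astabsP => A; rewrite !inE /= setactE.
  have -> : [set 'P%act x rot | x in A] = rot @: A by apply: eq_imset.
  by rewrite indep_set_rot card_imset //; exact: perm_inj.
have rot_n : pgroup n <[rot]>%g.
  rewrite /pgroup (pnat_dvd _ (pnat_id n_prime)) // order_dvdn.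
  by apply/eqP/permP => i; apply: val_inj; rewrite perm1 /= rotX modnDr modn_small.
rewrite (pgroup_fix_mod rot_n actX) indep_parity_fixed.
by case: b actX => _; rewrite ?cards0 ?cards1.
Qed.

Lemma signed_card_indep_neq0 (R : numDomainType) :
  (\sum_(A | indep_set e A) (-1) ^+ #|A| != 0 :> R)%R.
Proof.
have card_parity b : (#|[set A | indep_set e A && (odd #|A| == b)]|%:R
    = \sum_(A | indep_set e A && (odd #|A| == b)) 1 :> R)%R.
  by rewrite -sum1_card natr_sum; apply: eq_bigl => A; rewrite inE.
rewrite (bigID (fun A : {set 'I_n} => odd #|A|)) /= addrC.
rewrite (eq_big (fun A => indep_set e A && (odd #|A| == false)) (fun=> 1%R));
  first last.
- by move=> A /andP[_ /negbTE oA]; rewrite -signr_odd oA.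
- by move=> A; rewrite eqbF_neg.
rewrite [X in (_ + X)%R]
  (eq_big (fun A => indep_set e A && (odd #|A| == true)) (fun=> (-1)%R)); first last.
- by move=> A /andP[_ oA]; rewrite -signr_odd oA.
- by move=> A; rewrite eqb_id.
rewrite sumrN -!card_parity subr_eq0 eqr_nat; apply/eqP => same_card.
have := card_indep_parity_mod false; rewrite same_card card_indep_parity_mod.
by rewrite mod0n modn_small ?prime_gt1.
Qed.

End Rotation.

Section Circulant.
Variables (n : nat) (S : seq nat).

Lemma val_ordS (i : 'I_n) : ordS i = (if i.+1 == n then 0 else i.+1) :> nat.
Proof.
rewrite /=; case: eqP => [->|ne]; first by rewrite modnn.
by rewrite modn_small //; have := ltn_ord i; lia.
Qed.

Lemma cdist_ordS (i j : 'I_n) : cdist (ordS i) (ordS j) = cdist i j.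
Proof.
rewrite /cdist !val_ordS; have := ltn_ord i; have := ltn_ord j.
by case: eqP; case: eqP; lia.
Qed.

Lemma circ_edge_ordS (i j : 'I_n) : circ_edge S (ordS i) (ordS j) = circ_edge S i j.
Proof. by rewrite /circ_edge cdist_ordS (inj_eq (@ordS_inj n)). Qed.

Lemma circ_edge_irrefl : irreflexive (@circ_edge n S).
Proof. by move=> i; rewrite /circ_edge eqxx. Qed.

(* The vertices 0 and s, for any s in S, are adjacent. *)
Lemma circ_setT_dep : S != [::] -> {subset S <= [pred s | 0 < s <= n./2]} ->
  ~~ indep_set (@circ_edge n S) setT.
Proof.
case: S => [|s S'] // _ S_range.
have /andP[s_gt0] := S_range s (mem_head _ _); rewrite geq_half_double -muln2 => s_le.
have n_gt0 : 0 < n by lia.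
have s_lt_n : s < n by lia.
apply/forall_inP => /(_ (Ordinal n_gt0) (in_setT _)).
move=> /forall_inP /(_ (Ordinal s_lt_n) (in_setT _)).
rewrite /circ_edge /cdist /=.
have -> : minn (maxn 0 s - minn 0 s) (n - (maxn 0 s - minn 0 s)) = s by lia.
by rewrite mem_head andbT -val_eqE /= eq_sym -lt0n s_gt0.
Qed.

End Circulant.

Section Compositions.
Variables n k : nat.

Definition fdeg (f : {ffun 'I_n -> 'I_k.+1}) : nat := \sum_i f i.

Definition fsupp (f : {ffun 'I_n -> 'I_k.+1}) : {set 'I_n} := [set i | 0 < f i].

Definition compositions (A : {set 'I_n}) :=
  [set f : {ffun 'I_n -> 'I_k.+1} | (fdeg f == k) && (fsupp f == A)].

Lemma fdeg_supp f : fdeg f = \sum_(i in fsupp f) f i.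
Proof.
rewrite /fdeg (bigID (mem (fsupp f))) /= [X in _ + X]big1 ?addn0 //.
by move=> i; rewrite inE -eqn0Ngt => /eqP.
Qed.

Lemma card_fsupp_le_fdeg f : #|fsupp f| <= fdeg f.
Proof. by rewrite fdeg_supp -sum1_card leq_sum // => i; rewrite inE. Qed.

Section SetCompositions.
Variables (A : {set 'I_n}) (a : nat) (x0 : 'I_n).
Hypotheses (cardA : #|A| = a.+1) (Ax0 : x0 \in A) (a_lt_k : a < k).

Let ev (j : 'I_a.+1) : 'I_n := enum_val (cast_ord (esym cardA) j).
Let rk (i : 'I_n) : 'I_a.+1 := cast_ord cardA (enum_rank_in Ax0 i).

Let evK : cancel ev rk.
Proof. by move=> j; rewrite /rk /ev enum_valK_in cast_ordKV. Qed.

Let ev_in j : ev j \in A. Proof. exact: enum_valP. Qed.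

Let rkK : {in A, cancel rk ev}.
Proof. by move=> i iA; rewrite /ev /rk cast_ordK enum_rankK_in. Qed.

Let sum_over_A (F : 'I_n -> nat) : \sum_(i in A) F i = \sum_(j < a.+1) F (ev j).
Proof.
rewrite (reindex ev); first by apply: eq_bigl => j; rewrite ev_in.
by exists rk => [j _ | i]; [exact: evK | rewrite inE; exact: rkK].
Qed.

(* A composition of k supported on A is a composition of k - #|A| into
   #|A| nonnegative parts, each shifted by one. *)
Definition of_parts (t : a.+1.-tuple 'I_(k - a.+1).+1) : {ffun 'I_n -> 'I_k.+1} :=
  [ffun i => if i \in A then inord (tnth t (rk i)).+1 else ord0].

Lemma of_parts_val t i : of_parts t i = (if i \in A then (tnth t (rk i)).+1 else 0) :> nat.
Proof.
rewrite ffunE; case: ifP => // _; rewrite inordK //.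
by have := ltn_ord (tnth t (rk i)); lia.
Qed.

Lemma of_parts_inj : injective of_parts.
Proof.
move=> t1 t2 eq_t; apply: eq_from_tnth => j; apply: val_inj.
have /eqP := congr1 (fun f : {ffun 'I_n -> 'I_k.+1} => f (ev j) : nat) eq_t.
by rewrite !of_parts_val ev_in evK eqSS => /eqP.
Qed.

Let parts := [set t : a.+1.-tuple 'I_(k - a.+1).+1 | \sum_(i <- t) i == k - a.+1].

Lemma of_parts_compositions : of_parts @: parts = compositions A.
Proof.
apply/setP => f; apply/imsetP/idP.
  case=> t; rewrite inE big_tuple => /eqP sum_t ->.
  have supp_t : fsupp (of_parts t) = A.
    by apply/setP => i; rewrite inE of_parts_val; case: ifP.
  rewrite inE supp_t eqxx andbT fdeg_supp supp_t sum_over_A; apply/eqP.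
  under eq_bigr => j _ do rewrite of_parts_val ev_in evK -addn1.
  by rewrite big_split /= sum1_card card_ord sum_t; lia.
rewrite inE => /andP[/eqP deg_f /eqP supp_f].
have f_pos j : 0 < f (ev j) by have := ev_in j; rewrite -supp_f inE.
pose u j := (f (ev j)).-1.
have sum_u : \sum_(j < a.+1) u j = k - a.+1.
  suff : \sum_(j < a.+1) (u j + 1) = k by rewrite big_split /= sum1_card card_ord; lia.
  rewrite -deg_f fdeg_supp supp_f sum_over_A.
  by apply: eq_bigr => j _; rewrite addn1 prednK.
have u_lt j : u j < (k - a.+1).+1 by rewrite ltnS -sum_u (bigD1 j) //= leq_addr.
exists [tuple inord (u j) | j < a.+1].
  rewrite inE big_tuple -[X in _ == X]sum_u; apply/eqP/eq_bigr => j _.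
  by rewrite tnth_mktuple inordK.
apply/ffunP => i; apply: ord_inj; rewrite of_parts_val; case: ifP => iA.
  by rewrite tnth_mktuple inordK // /u rkK // prednK // -(rkK iA).
by apply/eqP; rewrite eqn0Ngt; apply: contraFN iA; rewrite -supp_f inE.
Qed.

Lemma card_set_compositions : #|compositions A| = 'C(k.-1, a).
Proof.
rewrite -of_parts_compositions card_imset; last exact: of_parts_inj.
by rewrite card_ord_partitions; congr 'C(_, _); lia.
Qed.

End SetCompositions.

Lemma card_compositions (A : {set 'I_n}) :
  0 < k -> A != set0 -> #|compositions A| = 'C(k.-1, #|A|.-1).
Proof.
move=> k_gt0 A0; have /set0Pn[x0 Ax0] := A0.
have cardA : #|A| = (#|A|.-1).+1 by rewrite prednK // card_gt0.
have [lt_k | ge_k] := ltnP #|A|.-1 k; first exact: card_set_compositions cardA Ax0 lt_k.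
rewrite bin_small; last lia.
apply: eq_card0 => f; rewrite !inE; apply/andP => -[/eqP deg_f /eqP supp_f].
by have := card_fsupp_le_fdeg f; rewrite supp_f deg_f; lia.
Qed.

Lemma compositions0 : 0 < k -> compositions set0 = set0.
Proof.
move=> k_gt0; apply/setP => f; rewrite !inE; apply/andP => -[/eqP deg_f /eqP supp_f].
by have := fdeg_supp f; rewrite supp_f big_set0 deg_f; lia.
Qed.

End Compositions.

Local Open Scope ring_scope.

Section EdgeIdeal.
Variables (K : fieldType) (n : nat) (e : rel 'I_n).
Local Notation I := (@in_edge_ideal K n e).

Lemma in_edge_ideal0 : I 0.
Proof.
exists (fun _ _ => 0); symmetry; apply: big1 => i _; apply: big1 => j _.
by rewrite mul0r if_same.
Qed.

Lemma in_edge_idealD p q : I p -> I q -> I (p + q).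
Proof.
move=> [c ->] [d ->]; exists (fun i j => c i j + d i j).
rewrite -big_split; apply: eq_bigr => i _; rewrite -big_split; apply: eq_bigr => j _.
by case: (e i j); rewrite /= ?mulrDl ?addr0.
Qed.

Lemma in_edge_idealMl q p : I p -> I (q * p).
Proof.
move=> [c ->]; exists (fun i j => q * c i j).
rewrite mulr_sumr; apply: eq_bigr => i _; rewrite mulr_sumr; apply: eq_bigr => j _.
by case: (e i j); rewrite ?mulr0 ?mulrA.
Qed.

Lemma in_edge_idealZ a p : I p -> I (a *: p).
Proof. by rewrite -mul_mpolyC; apply: in_edge_idealMl. Qed.

Lemma in_edge_ideal_sum (T : Type) (r : seq T) (P : pred T) (F : T -> {mpoly K[n]}) :
  (forall x, P x -> I (F x)) -> I (\sum_(x <- r | P x) F x).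
Proof. by move=> IF; apply: (big_ind I in_edge_ideal0 in_edge_idealD). Qed.

Lemma in_edge_ideal_edge i j q : e i j -> I (q * ('X_i * 'X_j)).
Proof.
move=> eij; exists (fun a b => if (a == i) && (b == j) then q else 0).
rewrite (bigD1 i) //= (bigD1 j) //= !eqxx eij big1 ?addr0; last first.
  by move=> b /negbTE ->; rewrite andbF mul0r if_same.
rewrite big1 ?addr0 // => a /negbTE ->; apply: big1 => b _.
by rewrite mul0r if_same.
Qed.

Lemma mcoeff_edge_ideal p (m : 'X_{1..n}) :
  I p -> (forall i j, e i j -> (m i == 0%N) || (m j == 0%N)) -> p@_m = 0.
Proof.
move=> [c ->] m_indep; rewrite !raddf_sum; apply: big1 => i _.
rewrite raddf_sum; apply: big1 => j _; case: ifP => eij; last exact: mcoeff0.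
apply/eqP; apply: contraTT (m_indep i j eij).
rewrite -mcoeff_msupp -mpolyXD (perm_mem (msuppMX _ _)) => /mapP[m' _ ->].
by rewrite !mnmDE !mnm1E !eqxx; lia.
Qed.

Definition mnm_of k (f : {ffun 'I_n -> 'I_k.+1}) : 'X_{1..n} := [multinom f i | i < n].

Lemma mdeg_mnm_of k f : mdeg (@mnm_of k f) = fdeg f.
Proof. by rewrite mdegE; apply: eq_bigr => i _; rewrite mnmE. Qed.

Lemma mnm_of_inj k : injective (@mnm_of k).
Proof.
move=> f g /mnmP eq_fg; apply/ffunP => i; apply: ord_inj.
by have := eq_fg i; rewrite !mnmE.
Qed.

Definition std_exps k :=
  [set f : {ffun 'I_n -> 'I_k.+1} | (fdeg f == k) && indep_set e (fsupp f)].

Lemma std_exps_indep k f : f \in std_exps k ->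
  forall i j, e i j -> (@mnm_of k f i == 0%N) || (mnm_of f j == 0%N).
Proof.
rewrite inE => /andP[_ /forall_inP f_indep] i j eij.
rewrite !mnmE !eqn0Ngt -negb_and; apply/andP => -[fi fj].
move/(_ i): f_indep; rewrite inE fi => /(_ isT)/forall_inP/(_ j).
by rewrite inE fj eij => /(_ isT).
Qed.

Lemma std_monomials_indep k :
  exists F : 'I_#|std_exps k| -> {mpoly K[n]}, indep_mod I k F.
Proof.
exists (fun s => 'X_[mnm_of (enum_val s)]); split.
  move=> s; rewrite dhomogX /= mdeg_mnm_of.
  by have := enum_valP s; rewrite inE => /andP[].
move=> c /mcoeff_edge_ideal coef0 s.
have := coef0 _ (std_exps_indep (enum_valP s)).
rewrite raddf_sum (bigD1 s) //= big1 ?addr0 => [|t ts].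
  by rewrite mcoeffZ mcoeffX eqxx mulr1.
by rewrite mcoeffZ mcoeffX (inj_eq (@mnm_of_inj k)) (inj_eq enum_val_inj) (negbTE ts) mulr0.
Qed.

Hypothesis e_irrefl : irreflexive e.

Lemma in_edge_idealX (m : 'X_{1..n}) i j :
  e i j -> (0 < m i)%N -> (0 < m j)%N -> I 'X_[m].
Proof.
move=> eij mi mj; have ij : i != j by apply: contraTneq eij => ->; rewrite e_irrefl.
have le_m : (U_(i) + U_(j) <= m)%MM.
  apply/mnm_lepP => l; rewrite mnmDE !mnm1E.
  have [<-|il] := eqVneq i l; first by rewrite eq_sym (negbTE ij).
  by case: eqP => [<-|].
by rewrite -(submK le_m) !mpolyXD; apply: in_edge_ideal_edge.
Qed.

(* A k-form all of whose standard coefficients vanish is a combination of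
   non-standard monomials, each divisible by an edge monomial. *)
Lemma in_edge_ideal_of_std_coeffs k g : g \is k.-homog ->
  (forall f, f \in std_exps k -> g@_(mnm_of f) = 0) -> I g.
Proof.
move=> g_homog std0; rewrite (mpolyE g) big_seq.
apply: in_edge_ideal_sum => m m_supp; apply: in_edge_idealZ.
have [[i j] /and3P[eij mi mj] | m_indep] :=
  pickP (fun p : 'I_n * 'I_n => [&& e p.1 p.2, 0 < m p.1 & 0 < m p.2]%N).
  exact: in_edge_idealX eij mi mj.
have deg_m : mdeg m = k by apply: (dhomogP _ _ _ g_homog).
pose f : {ffun 'I_n -> 'I_k.+1} := [ffun i => inord (m i)].
have mnm_f : mnm_of f = m.
  apply/mnmP => i; rewrite mnmE ffunE inordK // ltnS -deg_m mdegE.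
  by rewrite (bigD1 i) //= leq_addr.
have f_std : f \in std_exps k.
  rewrite inE -mdeg_mnm_of mnm_f deg_m eqxx /=.
  apply/forall_inP => i fi; apply/forall_inP => j fj; move: fi fj.
  rewrite !inE -!(mnmE (fun i => f i : nat)) -/(mnm_of f) mnm_f => mi mj.
  by apply: contraFN (m_indep (i, j)) => eij; apply/and3P.
by move: m_supp; rewrite mcoeff_msupp -mnm_f std0 ?eqxx.
Qed.

Lemma indep_mod_card_le k m (F : 'I_m -> {mpoly K[n]}) :
  indep_mod I k F -> (m <= #|std_exps k|)%N.
Proof.
move=> [F_homog F_indep]; rewrite leqNgt; apply/negP => lt_std.
pose M := \matrix_(s < m, t < #|std_exps k|) (F s)@_(mnm_of (enum_val t)).
have kerM : kermx M != 0.
  by rewrite kermx_eq0 /row_free neq_ltn (leq_ltn_trans (rank_leq_col M) lt_std).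
pose c := nz_row (kermx M).
have cM : c *m M = 0 by apply/sub_kermxP; exact: nz_row_sub.
suff /F_indep c0 : I (\sum_(s < m) c 0 s *: F s).
  by move: kerM; rewrite -nz_row_eq0 -/c => /negP; apply; apply/eqP/rowP => s; rewrite c0 mxE.
apply: in_edge_ideal_of_std_coeffs => [|f f_std].
  by apply: rpred_sum => s _; apply/rpredZ/F_homog.
have := congr1 (fun v : 'rV_#|std_exps k| => v 0 (enum_rank_in f_std f)) cM.
rewrite !mxE => <-; rewrite raddf_sum; apply: eq_bigr => s _.
by rewrite /= mcoeffZ mxE enum_rankK_in.
Qed.

Lemma edge_ideal_hilbert : is_hilbert_function I (fun k => #|std_exps k|).
Proof.
move=> k; split; first exact: std_monomials_indep.
by move=> m F; apply: indep_mod_card_le.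
Qed.

End EdgeIdeal.

Section BinomialPoly.
Variable R : numFieldType.

Definition binpoly (j : nat) : {poly R} :=
  (j`!%:R)^-1 *: \prod_(t < j) ('X - t.+1%:R%:P).

Lemma horner_binpoly_nat j k : (0 < k)%N -> (binpoly j).[k%:R] = 'C(k.-1, j)%:R.
Proof.
case: k => // k _; rewrite hornerZ horner_prod.
under eq_bigr => t _ do rewrite hornerXsubC.
have -> : \prod_(t < j) (k.+1%:R - t.+1%:R : R) = (k ^_ j)%:R.
  elim: j => [|j IH]; first by rewrite big_ord0.
  rewrite big_ord_recr /= IH ffactnSr natrM; have [le_jk | lt_kj] := leqP j k.
    by rewrite -natrB // subSS.
  by rewrite ffact_small // !mul0r.
by rewrite -bin_ffact natrM mulrC mulfK // pnatr_eq0 -lt0n fact_gt0.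
Qed.

Lemma horner_binpoly0 j : (binpoly j).[0] = (-1) ^+ j.
Proof.
rewrite hornerZ horner_prod.
under eq_bigr => t _ do rewrite hornerXsubC sub0r.
have -> : \prod_(t < j) (- t.+1%:R : R) = (-1) ^+ j * j`!%:R.
  elim: j => [|j IH]; first by rewrite big_ord0 mul1r.
  by rewrite big_ord_recr /= IH factS natrM exprS; ring.
by rewrite mulrC mulfK // pnatr_eq0 -lt0n fact_gt0.
Qed.

End BinomialPoly.

Section IndepSetHilbertPoly.
Variables (n : nat) (e : rel 'I_n).

Lemma card_std_exps_supp k :
  #|std_exps e k| = (\sum_(A | indep_set e A) #|compositions k A|)%N.
Proof.
rewrite -sum1_card (partition_big (@fsupp n k) (indep_set e)) /=; last first.
  by move=> f; rewrite inE => /andP[].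
apply: eq_bigr => A indepA; rewrite -sum1_card; apply: eq_bigl => f.
by rewrite !inE; case: (fsupp f =P A) => [->|]; rewrite ?indepA ?andbT ?andbF.
Qed.

Lemma card_std_exps k : (0 < k)%N ->
  #|std_exps e k| = (\sum_(A | indep_set e A && (A != set0)) 'C(k.-1, #|A|.-1))%N.
Proof.
move=> k_gt0; rewrite card_std_exps_supp (bigID (pred1 set0)) /= big1 ?add0n.
  by apply: eq_bigr => A /andP[_ A0]; rewrite card_compositions.
by move=> A /andP[_ /eqP->]; rewrite compositions0 ?cards0.
Qed.

Lemma card_std_exps0 : #|std_exps e 0| = 1%N.
Proof.
rewrite (_ : std_exps e 0 = setT) ?cardsT ?card_ffun ?card_ord ?exp1n //.
apply/setP => f; rewrite !inE.
have supp0 : fsupp f = set0 by apply/setP => i; rewrite !inE [f i]ord1.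
by rewrite fdeg_supp supp0 big_set0 indep_set0.
Qed.

Definition indep_hpoly : {poly rat} :=
  \sum_(A | indep_set e A && (A != set0)) binpoly rat #|A|.-1.

Lemma agrees_from_indep_hpoly : agrees_from (fun k => #|std_exps e k|) indep_hpoly 1.
Proof.
move=> k k_gt0; rewrite card_std_exps // natr_sum horner_sum.
by apply: eq_bigr => A _; rewrite horner_binpoly_nat.
Qed.

Lemma horner_indep_hpoly0 :
  indep_hpoly.[0] = 1 - \sum_(A | indep_set e A) (-1) ^+ #|A|.
Proof.
rewrite horner_sum [in RHS](bigD1 set0) ?indep_set0 //= cards0 expr0 opprD addNKr.
rewrite -sumrN; apply: eq_bigr => A /andP[_ A0]; rewrite horner_binpoly0.
by rewrite -[in RHS](prednK (_ : 0 < #|A|)%N) ?card_gt0 // exprS mulN1r opprK.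
Qed.

End IndepSetHilbertPoly.

Theorem theorem2p3 (K : fieldType) (n : nat) (S : seq nat) :
  prime n ->
  S != [::] ->
  {subset S <= [pred s | (0 < s <= n./2)%N]} ->
  exists H : nat -> nat,
    is_hilbert_function (in_edge_ideal (K := K) (circ_edge (n := n) S)) H /\
    regularity_index H 1.
Proof.
move=> n_prime S_ne S_range; set e := circ_edge S.
exists (fun k => #|std_exps e k|); split.
  exact/edge_ideal_hilbert/circ_edge_irrefl.
have agree1 := agrees_from_indep_hpoly e.
exists (indep_hpoly e); split; first by exists 1%N.
split=> // -[|r] // /(_ 0%N isT).
rewrite card_std_exps0 horner_indep_hpoly0 => H0.
have := signed_card_indep_neq0 (@circ_edge_ordS n S) n_prime (circ_setT_dep S_ne S_range) rat.
by rewrite -/e; apply: contraNT => _; apply/eqP; move: H0; lra.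
Qed.
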